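(* For every formula $\psi(x,\vec y)$ in the language of $\mathbf{A}^{\natural}$, every tuple $\vec c$ of elements of $A^{\natural}$, and every $a\in A$, there are $b\in A$ and $n,m\le 8$ such that $\psi(a^1,\vec c)=b^n$ and $\psi(a^3,\vec c)=b^m$.
   Context: $\mathbf{A}$ is a fixed non-trivial algebra whose set $\mathcal{F}$ of basic operations contains no constant symbols, and $h$ is a unary function on $A$. Construction of $\mathbf{A}^{\natural}$: universe is the disjoint union of eight copies $A_1,\dots,A_8$ of $A$ ($a^i$ is the copy of $a$ in $A_i$); operations: each $n$-ary $f\in\mathcal{F}$ with $f(a_1^{m_1},\dots,a_n^{m_n})=(f^{\mathbf{A}}(a_1,\dots,a_n))^5$; a ternary $\heartsuit$ with $\heartsuit(a^m,b^n,c^k)=a^1$ if $a^m=c^k$, $h(a)^5=b^n$, $m\in\{1,3,4\}$; $=a^2$ if $a^m=c^k$, $h(a)^5=b^n$, $m\in\{2,5,6,7,8\}$; $=a^4$ if $m,k\in\{1,3,4\}$ and ($a^m\ne c^k$ or $h(a)^5\ne b^n$); $=a^7$ if $\{m,k\}\cap\{2,5,6,7,8\}\ne\emptyset$ and ($a^m\ne c^k$ or $h(a)^5\ne b^n$); a unary $\Box$ with $\Box(a^m)=a^m$ for $m\in\{1,2\}$, $a^{m-1}$ for even $m\ge3$, $a^{m+1}$ for odd $m\ge3$. *)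

From mathcomp Require Import all_boot.
Set Implicit Arguments. Unset Strict Implicit. Unset Printing Implicit Defensive.

(* The construction A^natural has universe A * 'I_8; the element (a, i)
   is the copy a^(i+1) of a in A_(i+1). *)

Section Natural.
Variables (A : eqType) (F : Type) (ar : F -> nat)
          (fA : forall f : F, ('I_(ar f) -> A) -> A) (h : A -> A).

Definition nat_univ := (A * 'I_8)%type.

(* a^m, the copy of a in A_m (for 1 <= m <= 8) *)
Definition cp (a : A) (m : nat) : nat_univ := (a, inord m.-1).
Definition ix (u : nat_univ) : nat := (u.2 : nat).+1.

Definition in134 (m : nat) : bool := m \in [:: 1; 3; 4].

Definition nat_fop (f : F) (args : 'I_(ar f) -> nat_univ) : nat_univ :=
  cp (fA (fun i => (args i).1)) 5.

Definition nat_heart (x y z : nat_univ) : nat_univ :=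
  let a := x.1 in
  if (x == z) && (cp (h a) 5 == y) then
    (if in134 (ix x) then cp a 1 else cp a 2)
  else if in134 (ix x) && in134 (ix z) then cp a 4
  else cp a 7.

Definition nat_box (x : nat_univ) : nat_univ :=
  let m := ix x in
  if m <= 2 then x
  else if odd m then cp x.1 m.+1 else cp x.1 m.-1.

Inductive term (V : Type) : Type :=
| TVar of V
| TApp (f : F) of ('I_(ar f) -> term V)
| THeart of term V & term V & term V
| TBox of term V.

Fixpoint eval (V : Type) (env : V -> nat_univ) (t : term V) : nat_univ :=
  match t with
  | TVar v => env v
  | TApp f ts => nat_fop (fun i => eval env (ts i))
  | THeart t1 t2 t3 => nat_heart (eval env t1) (eval env t2) (eval env t3)
  | TBox t1 => nat_box (eval env t1)
  end.

End Natural.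

(* environment for psi(x, y_1..y_k): None is x, Some i is y_i *)
Definition env_xy (U : Type) (k : nat) (x : U) (c : 'I_k -> U) (v : option 'I_k) : U :=
  match v with None => x | Some i => c i end.

From mathcomp Require Import all_boot.
From Stdlib Require Import FunctionalExtensionality.

(* Projection onto A is compatible with every operation of A^natural: a basic
   operation yields a copy of f^A applied to the A-components of its
   arguments, while heart and box yield a copy of the A-component of their
   first argument.  Hence the A-component of the value of psi depends only on
   the A-components of the assignment, and a^1, a^3 both have A-component a. *)

Section ProjectionToA.
Variables (A : eqType) (F : Type) (ar : F -> nat)
          (fA : forall f : F, ('I_(ar f) -> A) -> A) (h : A -> A).

Lemma cp_fst_ix (u : nat_univ A) : u = cp u.1 (ix u).
Proof. by case: u => b i; rewrite /cp /ix /= inord_val. Qed.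

Lemma ix_bounds (u : nat_univ A) : 1 <= ix u <= 8.
Proof. by rewrite /ix ltn_ord. Qed.

Lemma heart_fst (x y z : nat_univ A) : (nat_heart h x y z).1 = x.1.
Proof. by rewrite /nat_heart; repeat case: ifP. Qed.

Lemma box_fst (x : nat_univ A) : (nat_box x).1 = x.1.
Proof. by rewrite /nat_box; repeat case: ifP. Qed.

Lemma eval_fst_congr (V : Type) (e1 e2 : V -> nat_univ A) :
  (forall v, (e1 v).1 = (e2 v).1) ->
  forall t : term ar V, (eval fA h e1 t).1 = (eval fA h e2 t).1.
Proof.
move=> e12; elim=> [v|f ts IHts|t1 IH1 t2 _ t3 _|t1 IH1] /=.
- exact: e12.
- congr (fA f); apply: functional_extensionality => i; exact: IHts.
- by rewrite !heart_fst.
- by rewrite !box_fst.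
Qed.

End ProjectionToA.

Theorem lemma6p5 (A : eqType) (F : Type) (ar : F -> nat)
    (fA : forall f : F, ('I_(ar f) -> A) -> A) (h : A -> A)
    (nontriv : exists a1 a2 : A, a1 != a2)
    (no_const : forall f : F, 0 < ar f)
    (k : nat) (psi : term ar (option 'I_k)) (c : 'I_k -> nat_univ A) (a : A) :
  exists (b : A) (n m : nat),
    [/\ 1 <= n <= 8, 1 <= m <= 8,
        eval fA h (env_xy (cp a 1) c) psi = cp b n &
        eval fA h (env_xy (cp a 3) c) psi = cp b m].
Proof.
set u1 := eval fA h (env_xy (cp a 1) c) psi.
set u3 := eval fA h (env_xy (cp a 3) c) psi.
have same_fst : u1.1 = u3.1 by apply: eval_fst_congr => -[].
exists u1.1, (ix u1), (ix u3); split; rewrite ?ix_bounds //.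
- exact: cp_fst_ix.
- by rewrite same_fst; exact: cp_fst_ix.
Qed.
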